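(* Let $p>1$ and let $s,q,V:\mathbb{R}^3\to(0,\infty)$ be radially symmetric $C^2$-functions, and put $T=2\pi\sqrt{s(0)/q(0)}$. Assume (H2), (H3), (H4) below and either (H1) or (H1)': (H1) $T\sqrt{q(x)/s(x)}<2\pi$ for all $x\neq0$; (H1)' $T\sqrt{q(x)/s(x)}>2\pi$ for all $x\neq 0$; (H2) $\bigl|2\pi-T\sqrt{q(x)/s(x)}\bigr|^{\frac{1}{p-1}}\to 0$ in the $C^2$-sense as $x\to 0$; (H3) $\sup_{x\in\mathbb{R}^3}\bigl|2\pi-T\sqrt{q(x)/s(x)}\bigr|\,e^{\delta(p-1)|x|}<\infty$ for some $\delta>0$; (H4) $\sup_{x\in\mathbb{R}^3} q(x)/V(x)<\infty$. Then there exists a continuum of $T$-periodic $\mathbb{C}^3$-valued monochromatic breather solutions $U(x,t)=e^{\frac{2\pi}{T}it}\mathbf{U}(x)$ of $$s(x)\partial_t^2U+\nabla\times\nabla\times U+q(x)U\pm V(x)|U|^{p-1}U=0\quad\text{on }\mathbb{R}^3\times\mathbb{R},$$ with sign $+$ in case (H1) and sign $-$ in case (H1)', satisfying $\sup_{x\in\mathbb{R}^3}|\mathbf{U}(x)|e^{\delta|x|}<\infty$.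
   Context: A function $f:\mathbb{R}^3\to\mathbb{R}$ is radially symmetric if $f(x)$ depends only on $|x|$. For $f:\mathbb{R}^3\to\mathbb{R}$ one says $f(x)\to 0$ in the $C^2$-sense as $x\to 0$ if $f(x)\to0$, $\nabla f(x)\to 0$ and $D^2f(x)\to 0$ as $x\to 0$. Solutions are classical; $|U|$ denotes the Euclidean norm in $\mathbb{C}^3$. *)

From Stdlib Require Import Reals.
From Coquelicot Require Import Coquelicot.
Open Scope R_scope.

Definition R3 := (R * R * R)%type.
Definition origin : R3 := (0, 0, 0).
Definition x1 (x : R3) : R := fst (fst x).
Definition x2 (x : R3) : R := snd (fst x).
Definition x3 (x : R3) : R := snd x.
Definition vnorm (x : R3) : R := sqrt (x1 x ^ 2 + x2 x ^ 2 + x3 x ^ 2).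

Inductive ax := A1 | A2 | A3.
Definition shift (i : ax) (x : R3) (h : R) : R3 :=
  match i with
  | A1 => (x1 x + h, x2 x, x3 x)
  | A2 => (x1 x, x2 x + h, x3 x)
  | A3 => (x1 x, x2 x, x3 x + h)
  end.

Definition ex_pd (i : ax) (f : R3 -> R) (x : R3) : Prop :=
  ex_derive (fun h => f (shift i x h)) 0.
Definition pd (i : ax) (f : R3 -> R) (x : R3) : R :=
  Derive (fun h => f (shift i x h)) 0.

Definition isC1 (f : R3 -> R) : Prop :=
  (forall x, continuous f x) /\
  (forall i x, ex_pd i f x /\ continuous (pd i f) x).
Definition isC2 (f : R3 -> R) : Prop :=
  isC1 f /\ forall i, isC1 (pd i f).

Definition radial (f : R3 -> R) : Prop :=
  forall x y, vnorm x = vnorm y -> f x = f y.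

Definition C2_to_zero_at_origin (f : R3 -> R) : Prop :=
  filterlim f (locally' origin) (locally 0) /\
  (forall i, filterlim (pd i f) (locally' origin) (locally 0)) /\
  (forall i j, filterlim (pd i (pd j f)) (locally' origin) (locally 0)).

(** a^b for a >= 0, b > 0 (with 0^b = 0). *)
Definition rpow (a b : R) : R :=
  if Rlt_dec 0 a then Rpower a b else 0.

Definition period (s q : R3 -> R) : R := 2 * PI * sqrt (s origin / q origin).

Definition C3 := (C * C * C)%type.
Definition comp (k : ax) (u : C3) : C :=
  match k with A1 => fst (fst u) | A2 => snd (fst u) | A3 => snd u end.
Definition c3norm (u : C3) : R :=
  sqrt (Cmod (comp A1 u) ^ 2 + Cmod (comp A2 u) ^ 2 + Cmod (comp A3 u) ^ 2).

Definition isC2_field (U : R3 -> C3) : Prop :=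
  forall k, isC2 (fun x => Re (comp k (U x))) /\ isC2 (fun x => Im (comp k (U x))).

Definition pdC (i : ax) (g : R3 -> C) (x : R3) : C :=
  (pd i (fun y => Re (g y)) x, pd i (fun y => Im (g y)) x).

Definition curl (U : R3 -> C3) : R3 -> C3 := fun x =>
  ( Cminus (pdC A2 (fun y => comp A3 (U y)) x) (pdC A3 (fun y => comp A2 (U y)) x),
    Cminus (pdC A3 (fun y => comp A1 (U y)) x) (pdC A1 (fun y => comp A3 (U y)) x),
    Cminus (pdC A1 (fun y => comp A2 (U y)) x) (pdC A2 (fun y => comp A1 (U y)) x) ).

Definition d2t (W : R3 -> R -> C3) (k : ax) (x : R3) (t : R) : C :=
  (Derive_n (fun τ => Re (comp k (W x τ))) 2 t,
   Derive_n (fun τ => Im (comp k (W x τ))) 2 t).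

Definition monochromatic (T : R) (U : R3 -> C3) : R3 -> R -> C3 := fun x t =>
  let e := (cos (2 * PI / T * t), sin (2 * PI / T * t)) : C in
  (Cmult e (comp A1 (U x)), Cmult e (comp A2 (U x)), Cmult e (comp A3 (U x))).

Definition solves (sigma p : R) (s q V : R3 -> R) (W : R3 -> R -> C3) : Prop :=
  forall (x : R3) (t : R) (k : ax),
    Cplus (Cplus (Cplus
      (Cmult (RtoC (s x)) (d2t W k x t))
      (comp k (curl (curl (fun y => W y t)) x)))
      (Cmult (RtoC (q x)) (comp k (W x t))))
      (Cmult (RtoC (sigma * V x * rpow (c3norm (W x t)) (p - 1))) (comp k (W x t)))
    = RtoC 0.

(** A continuum (a family injectively parametrized by the interval (0,1)) of
    T-periodic monochromatic breathers U(x,t) = e^{(2pi/T) i t} U(x) with U C^2,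
    solving the equation with sign sigma, and sup_x |U(x)| e^{delta |x|} < oo. *)
Definition continuum_of_breathers (sigma p : R) (s q V : R3 -> R) (delta : R) : Prop :=
  exists F : R -> (R3 -> C3),
    (forall a b, 0 < a < 1 -> 0 < b < 1 -> a <> b -> F a <> F b) /\
    (forall a, 0 < a < 1 ->
       isC2_field (F a) /\
       solves sigma p s q V (monochromatic (period s q) (F a)) /\
       exists M : R, forall x, c3norm (F a x) * exp (delta * vnorm x) <= M).

(* The breathers are gradient fields U(x) = u(x) x/|x| with u radial, hence curl-free: then
   curl curl U = 0, and for U(x,t) = e^{i w t} U(x), w = 2 pi / T, the equation becomes the
   pointwise identity  q - w^2 s +- V |U|^{p-1} = 0.  With tau = T sqrt(q/s) one has
   w^2 s - q = V g (2 pi - tau),  g = s (2 pi + tau) / (T^2 V) > 0,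
   so |U| = (g |2 pi - tau|)^{1/(p-1)} solves it, the sign being that of 2 pi - tau, i.e. + under
   (H1) and - under (H1)'.  (H2) says that h = |2 pi - tau|^{1/(p-1)} vanishes to second order at
   the origin in the C^2 sense; this is what makes h x/|x| of class C^2 there, since the
   derivatives of x/|x| grow only like |x|^{-1} and |x|^{-2}.  For the decay, g is bounded where
   tau >= pi by (H4), and by (H3) the set where tau < pi is bounded.  Constant phases e^{i pi a},
   0 < a < 1, give the continuum. *)

From Stdlib Require Import Reals Lra Psatz FunctionalExtensionality.
From Coquelicot Require Import Coquelicot.
Open Scope R_scope.

Definition coord (m : ax) (x : R3) : R :=
  match m with A1 => x1 x | A2 => x2 x | A3 => x3 x end.

Definition kron (i m : ax) : R :=
  match i, m with A1, A1 => 1 | A2, A2 => 1 | A3, A3 => 1 | _, _ => 0 end.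

Lemma kron_sym i m : kron i m = kron m i.
Proof. destruct i, m; reflexivity. Qed.

Lemma Rabs_kron_le i m : Rabs (kron i m) <= 1.
Proof. destruct i, m; simpl; rewrite ?Rabs_R0, ?Rabs_R1; lra. Qed.

Lemma coord_shift i m x t : coord m (shift i x t) = coord m x + t * kron i m.
Proof. destruct i, m; destruct x as [[a b] c]; unfold coord, shift, kron, x1, x2, x3; simpl; ring. Qed.

Lemma coord_origin m : coord m origin = 0.
Proof. destruct m; reflexivity. Qed.

Lemma R3_ext (x y : R3) : (forall m, coord m x = coord m y) -> x = y.
Proof.
  destruct x as [[a b] c], y as [[d e] f]; intro H.
  generalize (H A1) (H A2) (H A3); unfold coord, x1, x2, x3; simpl; intros; subst; reflexivity.
Qed.

Lemma shift0 i x : shift i x 0 = x.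
Proof. apply R3_ext; intro m; rewrite coord_shift; ring. Qed.

Lemma shift_shift i x a b : shift i (shift i x a) b = shift i x (a + b).
Proof. apply R3_ext; intro m; rewrite !coord_shift; ring. Qed.

Lemma origin_dec (x : R3) : x = origin \/ x <> origin.
Proof.
  destruct (Req_dec (x1 x) 0), (Req_dec (x2 x) 0), (Req_dec (x3 x) 0);
    try (right; intro E; subst x; unfold x1, x2, x3 in *; simpl in *; lra).
  left; apply R3_ext; intros []; assumption.
Qed.

Lemma coord_neq0 x : x <> origin -> exists m, coord m x <> 0.
Proof.
  intro Hx; destruct (Req_dec (x1 x) 0), (Req_dec (x2 x) 0), (Req_dec (x3 x) 0);
    try solve [exists A1; assumption | exists A2; assumption | exists A3; assumption].
  exfalso; apply Hx, R3_ext; intros []; assumption.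
Qed.

Lemma shift_origin_neq i t : t <> 0 -> shift i origin t <> origin.
Proof.
  intros Ht E; apply (f_equal (coord i)) in E.
  rewrite coord_shift, coord_origin in E; destruct i; simpl in E; lra.
Qed.

Lemma ball_R3 (x y : R3) e : ball x e y <-> forall m, Rabs (coord m y - coord m x) < e.
Proof.
  destruct x as [[a b] c], y as [[u v] w].
  unfold ball; simpl; unfold prod_ball, AbsRing_ball, abs, minus, plus, opp; simpl.
  split.
  - intros [[H1 H2] H3] []; assumption.
  - intro H; exact (conj (conj (H A1) (H A2)) (H A3)).
Qed.

Lemma ball_shift i x t0 t e : Rabs (t - t0) < e -> ball (shift i x t0) e (shift i x t).
Proof.
  intro H; apply ball_R3; intro m; rewrite !coord_shift.
  replace (coord m x + t * kron i m - (coord m x + t0 * kron i m)) with ((t - t0) * kron i m) by ring.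
  rewrite Rabs_mult; pose proof (Rabs_kron_le i m); pose proof (Rabs_pos (t - t0)); nra.
Qed.

Lemma continuous_shift i x t : continuous (shift i x) t.
Proof.
  apply filterlim_locally; intro e; exists e; intros t' Ht'.
  apply ball_shift; exact Ht'.
Qed.

Lemma locally_shift i x (P : R3 -> Prop) :
  locally x P -> locally 0 (fun t => P (shift i x t)).
Proof.
  intro H; apply (continuous_shift i x 0); rewrite shift0; exact H.
Qed.

Lemma continuous_coord m x : continuous (coord m) x.
Proof.
  apply filterlim_locally; intro e; exists e; intros y Hy.
  exact (proj1 (ball_R3 x y e) Hy m).
Qed.

Definition punctured (x : R3) : Prop := x <> origin.

Lemma open_punctured : open punctured.
Proof.
  intros x Hx; destruct (coord_neq0 x Hx) as [m Hm].
  exists (mkposreal _ (Rabs_pos_lt _ Hm)); intros y Hy E; subst y.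
  pose proof (proj1 (ball_R3 _ _ _) Hy m) as Hym; simpl in Hym.
  rewrite coord_origin, Rminus_0_l, Rabs_Ropp in Hym; lra.
Qed.

(** * Partial derivatives and C^2 functions on open sets *)

Lemma pd_correct i f x t : ex_pd i f (shift i x t) ->
  is_derive (fun u => f (shift i x u)) t (pd i f (shift i x t)).
Proof.
  unfold ex_pd, pd; intro H; apply Derive_correct in H.
  apply (is_derive_ext (fun u => f (shift i (shift i x t) (u - t)))).
  { intro u; rewrite shift_shift; do 2 f_equal; ring. }
  rewrite <- (Rmult_1_l (Derive _ 0)).
  apply (is_derive_comp (fun u => f (shift i (shift i x t) u)) (fun u => u - t) t).
  - replace (t - t) with 0 by ring; exact H.
  - auto_derive; auto; ring.
Qed.

Lemma pd_line i f x g l : (forall t, f (shift i x t) = g t) -> is_derive g 0 l ->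
  ex_pd i f x /\ pd i f x = l.
Proof.
  unfold ex_pd, pd; intros E D; apply (is_derive_ext _ _ _ _ (fun t => eq_sym (E t))) in D.
  split; [eexists; exact D | exact (is_derive_unique _ _ _ D)].
Qed.

Lemma pd_ext_loc i f g x : locally x (fun y => f y = g y) ->
  pd i f x = pd i g x /\ (ex_pd i f x -> ex_pd i g x).
Proof.
  unfold ex_pd, pd; intro H; apply (locally_shift i) in H; split.
  - apply Derive_ext_loc; exact H.
  - intro E; exact (ex_derive_ext_loc _ _ _ H E).
Qed.

Lemma pd_const i c x : ex_pd i (fun _ => c) x /\ pd i (fun _ => c) x = 0.
Proof. unfold ex_pd, pd; split; [apply ex_derive_const | apply Derive_const]. Qed.

Lemma pd_coord i m x : ex_pd i (coord m) x /\ pd i (coord m) x = kron i m.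
Proof.
  unfold ex_pd, pd.
  assert (E : forall h, coord m x + h * kron i m = coord m (shift i x h))
    by (intro; symmetry; apply coord_shift).
  assert (D : is_derive (fun h => coord m x + h * kron i m) 0 (kron i m))
    by (auto_derive; auto; ring).
  split.
  - eexists; exact (is_derive_ext _ _ _ _ E D).
  - apply is_derive_unique, (is_derive_ext _ _ _ _ E D).
Qed.

Lemma pd_plus i f g x : ex_pd i f x -> ex_pd i g x ->
  ex_pd i (fun y => f y + g y) x /\ pd i (fun y => f y + g y) x = pd i f x + pd i g x.
Proof.
  unfold ex_pd, pd; intros A B; split.
  - apply (ex_derive_plus (fun h => f (shift i x h)) (fun h => g (shift i x h))); auto.
  - apply (Derive_plus (fun h => f (shift i x h)) (fun h => g (shift i x h))); auto.
Qed.

Lemma pd_mult i f g x : ex_pd i f x -> ex_pd i g x ->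
  ex_pd i (fun y => f y * g y) x /\ pd i (fun y => f y * g y) x = pd i f x * g x + f x * pd i g x.
Proof.
  unfold ex_pd, pd; intros A B; split.
  - apply (ex_derive_mult (fun h => f (shift i x h)) (fun h => g (shift i x h))); auto.
  - rewrite (Derive_mult (fun h => f (shift i x h)) (fun h => g (shift i x h))); auto.
    rewrite shift0; reflexivity.
Qed.

Lemma pd_scal i c f x : pd i (fun y => c * f y) x = c * pd i f x.
Proof. unfold pd; apply Derive_scal. Qed.

Lemma pd_comp i (phi : R -> R) d f x : is_derive phi (f x) d -> ex_pd i f x ->
  ex_pd i (fun y => phi (f y)) x /\ pd i (fun y => phi (f y)) x = d * pd i f x.
Proof.
  unfold ex_pd, pd; intros A B; apply Derive_correct in B; rewrite <- (shift0 i x) in A.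
  pose proof (is_derive_comp phi (fun h => f (shift i x h)) 0 d _ A B) as C.
  split.
  - eexists; exact C.
  - etransitivity; [exact (is_derive_unique _ _ _ C) |].
    unfold scal; simpl; unfold mult; simpl; ring.
Qed.

Definition C1on (Om : R3 -> Prop) (f : R3 -> R) : Prop :=
  forall x, Om x -> continuous f x /\ forall i, ex_pd i f x /\ continuous (pd i f) x.

Definition C2on (Om : R3 -> Prop) (f : R3 -> R) : Prop :=
  C1on Om f /\ forall i, C1on Om (pd i f).

Lemma isC2_C2on f : isC2 f <-> C2on (fun _ => True) f.
Proof.
  unfold isC2, isC1, C2on, C1on; split.
  - intros [[A B] C]; split.
    + intros x _; exact (conj (A x) (fun i => B i x)).
    + intros i x _; destruct (C i) as [D E]; exact (conj (D x) (fun j => E j x)).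
  - intros [A B]; split; [split |].
    + intro x; exact (proj1 (A x I)).
    + intros i x; exact (proj2 (A x I) i).
    + intro i; split; [intro x; exact (proj1 (B i x I)) | intros j x; exact (proj2 (B i x I) j)].
Qed.

Lemma C2on_sub (Om Om' : R3 -> Prop) f : (forall x, Om' x -> Om x) -> C2on Om f -> C2on Om' f.
Proof.
  intros H [A B]; split; [intros x Hx; exact (A x (H x Hx)) | intros i x Hx; exact (B i x (H x Hx))].
Qed.

Lemma C1on_ex_pd Om f i x : C1on Om f -> Om x -> ex_pd i f x.
Proof. intros C Hx; apply (C x Hx). Qed.

Section OpenSet.

Variable Om : R3 -> Prop.
Hypothesis Om_open : open Om.

Lemma locally_on x (f g : R3 -> R) : Om x -> (forall y, Om y -> f y = g y) ->
  locally x (fun y => f y = g y).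
Proof. intros Hx E; apply (filter_imp Om); auto. Qed.

Lemma pd_ext_on i f g x : Om x -> (forall y, Om y -> f y = g y) ->
  pd i f x = pd i g x /\ (ex_pd i f x -> ex_pd i g x).
Proof. intros Hx E; apply pd_ext_loc, locally_on; auto. Qed.

Lemma pd_ext_on_eq i f g x l : Om x -> (forall y, Om y -> f y = g y) ->
  ex_pd i f x /\ pd i f x = l -> ex_pd i g x /\ pd i g x = l.
Proof.
  intros Hx E [D P]; destruct (pd_ext_on i f g x Hx E) as [E1 E2].
  split; [exact (E2 D) | rewrite <- E1; exact P].
Qed.

Lemma C1on_ext f g : (forall x, Om x -> f x = g x) -> C1on Om f -> C1on Om g.
Proof.
  intros E C x Hx; destruct (C x Hx) as [C1 C2]; split.
  - apply (continuous_ext_loc g f); [apply locally_on |]; auto.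
  - intro i; destruct (C2 i) as [D1 D2]; split.
    + exact (proj2 (pd_ext_on i f g x Hx E) D1).
    + apply (continuous_ext_loc (pd i g) (pd i f)); [apply locally_on |]; auto.
      intros y Hy; apply (pd_ext_on i f g y Hy E).
Qed.

Lemma C2on_ext f g : (forall x, Om x -> f x = g x) -> C2on Om f -> C2on Om g.
Proof.
  intros E [C D]; split; [apply (C1on_ext f) | intro i; apply (C1on_ext (pd i f))]; auto.
  intros y Hy; apply (pd_ext_on i f g y Hy E).
Qed.

Lemma C1on_const c : C1on Om (fun _ => c).
Proof.
  intros x _; split; [apply continuous_const |]; intro i; split; [apply pd_const |].
  apply (continuous_ext (fun _ => 0)); [intro; symmetry; apply pd_const | apply continuous_const].
Qed.

Lemma C1on_coord m : C1on Om (coord m).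
Proof.
  intros x _; split; [apply continuous_coord |]; intro i; split; [apply pd_coord |].
  apply (continuous_ext (fun _ => kron i m));
    [intro; symmetry; apply pd_coord | apply continuous_const].
Qed.

Lemma C1on_plus f g : C1on Om f -> C1on Om g -> C1on Om (fun y => f y + g y).
Proof.
  intros Cf Cg x Hx; destruct (Cf x Hx) as [F1 F2], (Cg x Hx) as [G1 G2].
  split; [apply (continuous_plus f g); auto |]; intro i.
  destruct (F2 i) as [F3 F4], (G2 i) as [G3 G4]; split; [apply (pd_plus i f g x F3 G3) |].
  apply (continuous_ext_loc _ (fun y => pd i f y + pd i g y)).
  - apply locally_on; auto; intros y Hy; symmetry.
    apply (pd_plus i f g y); [apply (Cf y Hy) | apply (Cg y Hy)].
  - apply (continuous_plus (pd i f) (pd i g)); auto.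
Qed.

Lemma C1on_mult f g : C1on Om f -> C1on Om g -> C1on Om (fun y => f y * g y).
Proof.
  intros Cf Cg x Hx; destruct (Cf x Hx) as [F1 F2], (Cg x Hx) as [G1 G2].
  split; [apply (continuous_mult f g); auto |]; intro i.
  destruct (F2 i) as [F3 F4], (G2 i) as [G3 G4]; split; [apply (pd_mult i f g x F3 G3) |].
  apply (continuous_ext_loc _ (fun y => pd i f y * g y + f y * pd i g y)).
  - apply locally_on; auto; intros y Hy; symmetry.
    apply (pd_mult i f g y); [apply (Cf y Hy) | apply (Cg y Hy)].
  - apply (continuous_plus (fun y => pd i f y * g y) (fun y => f y * pd i g y));
      apply (continuous_mult (K := R_AbsRing)); auto.
Qed.

Lemma C1on_comp (I : R -> Prop) (phi phi' : R -> R) f :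
  (forall x, Om x -> I (f x)) ->
  (forall y, I y -> is_derive phi y (phi' y) /\ continuous phi' y) ->
  C1on Om f -> C1on Om (fun y => phi (f y)).
Proof.
  intros HI Hphi Cf x Hx; destruct (Cf x Hx) as [F1 F2].
  destruct (Hphi (f x) (HI x Hx)) as [P1 P2].
  split.
  - apply (continuous_comp f phi); auto.
    apply (ex_derive_continuous (V := R_NormedModule)); eexists; exact P1.
  - intro i; destruct (F2 i) as [F3 F4]; split; [apply (pd_comp i phi (phi' (f x)) f x P1 F3) |].
    apply (continuous_ext_loc _ (fun y => phi' (f y) * pd i f y)).
    + apply locally_on; auto; intros y Hy; symmetry.
      apply (pd_comp i phi (phi' (f y))); [apply Hphi, HI | apply Cf]; auto.
    + apply (continuous_mult (K := R_AbsRing) (fun y => phi' (f y))); auto.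
      apply (continuous_comp f phi'); auto.
Qed.

Lemma C2on_const c : C2on Om (fun _ => c).
Proof.
  split; [apply C1on_const | intro i].
  apply (C1on_ext (fun _ => 0)); [intros; symmetry; apply pd_const | apply C1on_const].
Qed.

Lemma C2on_coord m : C2on Om (coord m).
Proof.
  split; [apply C1on_coord | intro i].
  apply (C1on_ext (fun _ => kron i m)); [intros; symmetry; apply pd_coord | apply C1on_const].
Qed.

Lemma C2on_plus f g : C2on Om f -> C2on Om g -> C2on Om (fun y => f y + g y).
Proof.
  intros [Cf Df] [Cg Dg]; split; [apply C1on_plus; auto | intro i].
  apply (C1on_ext (fun y => pd i f y + pd i g y)); [| apply C1on_plus; auto].
  intros y Hy; symmetry; apply (pd_plus i f g y); [apply (Cf y Hy) | apply (Cg y Hy)].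
Qed.

Lemma C2on_mult f g : C2on Om f -> C2on Om g -> C2on Om (fun y => f y * g y).
Proof.
  intros [Cf Df] [Cg Dg]; split; [apply C1on_mult; auto | intro i].
  apply (C1on_ext (fun y => pd i f y * g y + f y * pd i g y)).
  - intros y Hy; symmetry; apply (pd_mult i f g y); [apply (Cf y Hy) | apply (Cg y Hy)].
  - apply C1on_plus; apply C1on_mult; auto.
Qed.

Lemma C2on_scal c f : C2on Om f -> C2on Om (fun y => c * f y).
Proof. apply C2on_mult, C2on_const. Qed.

Lemma pd_pd_mult i j f g x : C2on Om f -> C2on Om g -> Om x ->
  pd j (pd i (fun y => f y * g y)) x =
  pd j (pd i f) x * g x + pd i f x * pd j g x + pd j f x * pd i g x + f x * pd j (pd i g) x.
Proof.
  intros [Cf Df] [Cg Dg] Hx.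
  rewrite <- (proj1 (pd_ext_on j (fun y => pd i f y * g y + f y * pd i g y) _ x Hx
                       (fun y Hy => eq_sym (proj2 (pd_mult i f g y (C1on_ex_pd _ _ _ _ Cf Hy)
                                                                   (C1on_ex_pd _ _ _ _ Cg Hy)))))).
  destruct (pd_mult j (pd i f) g x (C1on_ex_pd _ _ _ _ (Df i) Hx) (C1on_ex_pd _ _ _ _ Cg Hx))
    as [M1 M2].
  destruct (pd_mult j f (pd i g) x (C1on_ex_pd _ _ _ _ Cf Hx) (C1on_ex_pd _ _ _ _ (Dg i) Hx))
    as [N1 N2].
  rewrite (proj2 (pd_plus j _ _ x M1 N1)), M2, N2; ring.
Qed.

Lemma C2on_comp (I : R -> Prop) (phi phi' phi'' : R -> R) f :
  (forall x, Om x -> I (f x)) ->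
  (forall y, I y -> is_derive phi y (phi' y) /\ is_derive phi' y (phi'' y) /\ continuous phi'' y) ->
  C2on Om f -> C2on Om (fun y => phi (f y)).
Proof.
  intros HI Hphi [Cf Df]; split.
  - apply (C1on_comp I phi phi'); auto.
    intros y Hy; destruct (Hphi y Hy) as [A [B _]]; split; auto.
    apply (ex_derive_continuous (V := R_NormedModule)); eexists; exact B.
  - intro i; apply (C1on_ext (fun y => phi' (f y) * pd i f y)).
    + intros y Hy; symmetry; apply (pd_comp i phi (phi' (f y))); [apply Hphi, HI | apply Cf]; auto.
    + apply C1on_mult; auto; apply (C1on_comp I phi' phi''); auto.
      intros y Hy; apply Hphi; auto.
Qed.

End OpenSet.

Lemma rpow_Rpower a b : 0 < a -> rpow a b = Rpower a b.
Proof. intro Ha; unfold rpow; destruct (Rlt_dec 0 a); [reflexivity | lra]. Qed.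

Lemma rpow_0 b : rpow 0 b = 0.
Proof. unfold rpow; destruct (Rlt_dec 0 0); [lra | reflexivity]. Qed.

Lemma rpow_ge0 a b : 0 <= rpow a b.
Proof. unfold rpow; destruct (Rlt_dec 0 a); [left; apply exp_pos | lra]. Qed.

Lemma rpow_gt0 a b : 0 < a -> 0 < rpow a b.
Proof. intro Ha; rewrite rpow_Rpower by exact Ha; apply exp_pos. Qed.

Lemma locally_gt0 y : 0 < y -> locally y (fun z => 0 < z).
Proof.
  intro Hy; exists (mkposreal y Hy); intros z Hz.
  unfold ball in Hz; simpl in Hz; unfold AbsRing_ball, abs, minus, plus, opp in Hz; simpl in Hz.
  apply Rabs_def2 in Hz; lra.
Qed.

Lemma is_derive_rpow c y : 0 < y -> is_derive (fun z => rpow z c) y (c * rpow y (c - 1)).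
Proof.
  intro Hy; rewrite rpow_Rpower by exact Hy.
  apply (is_derive_ext_loc (fun z => Rpower z c)).
  - apply (filter_imp (fun z => 0 < z)); [| apply locally_gt0, Hy].
    intros z Hz; symmetry; apply rpow_Rpower, Hz.
  - apply is_derive_Reals, derivable_pt_lim_power, Hy.
Qed.

Lemma continuous_of_is_derive (f : R -> R) y l : is_derive f y l -> continuous f y.
Proof. intro H; apply (ex_derive_continuous (V := R_NormedModule)); eexists; exact H. Qed.

Lemma rpow_smooth b y : 0 < y ->
  is_derive (fun z => rpow z b) y (b * rpow y (b - 1)) /\
  is_derive (fun z => b * rpow z (b - 1)) y (b * ((b - 1) * rpow y (b - 1 - 1))) /\
  continuous (fun z => b * ((b - 1) * rpow z (b - 1 - 1))) y.
Proof.
  intro Hy; split; [| split].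
  - apply is_derive_rpow, Hy.
  - apply (is_derive_scal (fun z => rpow z (b - 1))), is_derive_rpow, Hy.
  - eapply continuous_of_is_derive.
    apply (is_derive_scal (fun z => (b - 1) * rpow z (b - 1 - 1))).
    apply (is_derive_scal (fun z => rpow z (b - 1 - 1))), is_derive_rpow, Hy.
Qed.

Lemma sqrt_smooth y : 0 < y ->
  is_derive sqrt y (/ (2 * sqrt y)) /\
  is_derive (fun z => / (2 * sqrt z)) y (- / (4 * y * sqrt y)) /\
  continuous (fun z => - / (4 * z * sqrt z)) y.
Proof.
  intro Hy; assert (S : 0 < sqrt y) by (apply sqrt_lt_R0, Hy).
  split; [| split].
  - auto_derive; [exact Hy | field; lra].
  - auto_derive; [repeat split; lra |].
    replace (4 * y * sqrt y) with (4 * (sqrt y * sqrt y) * sqrt y) by (rewrite sqrt_sqrt; lra).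
    field; lra.
  - eapply continuous_of_is_derive; auto_derive; [| reflexivity].
    repeat split; try lra; apply Rgt_not_eq, Rmult_lt_0_compat; lra.
Qed.

Lemma inv_smooth y : 0 < y ->
  is_derive (fun z => / z) y (- / (y * y)) /\
  is_derive (fun z => - / (z * z)) y (2 / (y * y * y)) /\
  continuous (fun z => 2 / (z * z * z)) y.
Proof.
  intro Hy; assert (Hy3 : 0 < y * y * y) by (apply Rmult_lt_0_compat; nra).
  split; [| split].
  - auto_derive; [lra | field; lra].
  - auto_derive; [repeat split; apply Rgt_not_eq; nra | field; lra].
  - eapply continuous_of_is_derive; auto_derive; [lra | reflexivity].
Qed.

Lemma C2on_inv Om f : open Om -> (forall x, Om x -> 0 < f x) -> C2on Om f ->
  C2on Om (fun y => / f y).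
Proof. intros O P C; apply (C2on_comp Om O (fun z => 0 < z) _ _ _ f P inv_smooth C). Qed.

Lemma C2on_sqrt Om f : open Om -> (forall x, Om x -> 0 < f x) -> C2on Om f ->
  C2on Om (fun y => sqrt (f y)).
Proof. intros O P C; apply (C2on_comp Om O (fun z => 0 < z) _ _ _ f P sqrt_smooth C). Qed.

Lemma C2on_rpow Om f b : open Om -> (forall x, Om x -> 0 < f x) -> C2on Om f ->
  C2on Om (fun y => rpow (f y) b).
Proof. intros O P C; apply (C2on_comp Om O (fun z => 0 < z) _ _ _ f P (rpow_smooth b) C). Qed.

(** * The Euclidean norm and the radial unit vector *)

Definition sqnorm (x : R3) : R := coord A1 x ^ 2 + coord A2 x ^ 2 + coord A3 x ^ 2.

Lemma vnorm_sqnorm x : vnorm x = sqrt (sqnorm x).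
Proof. reflexivity. Qed.

Lemma sqnorm_shift i x t : sqnorm (shift i x t) =
  (coord A1 x + t * kron i A1) ^ 2 + (coord A2 x + t * kron i A2) ^ 2
  + (coord A3 x + t * kron i A3) ^ 2.
Proof. unfold sqnorm; rewrite !coord_shift; reflexivity. Qed.

Lemma sqnorm_pos x : x <> origin -> 0 < sqnorm x.
Proof.
  intro Hx; destruct (coord_neq0 x Hx) as [m Hm]; unfold sqnorm.
  pose proof (pow2_ge_0 (coord A1 x)); pose proof (pow2_ge_0 (coord A2 x));
    pose proof (pow2_ge_0 (coord A3 x)).
  assert (0 < coord m x ^ 2) by (rewrite <- Rsqr_pow2; apply Rsqr_pos_lt, Hm).
  destruct m; lra.
Qed.

Lemma vnorm_pos x : x <> origin -> 0 < vnorm x.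
Proof. intro Hx; apply sqrt_lt_R0, sqnorm_pos, Hx. Qed.

Lemma vnorm_ge0 x : 0 <= vnorm x.
Proof. apply sqrt_pos. Qed.

Lemma vnorm_origin : vnorm origin = 0.
Proof.
  rewrite vnorm_sqnorm; unfold sqnorm; rewrite !coord_origin.
  replace (0 ^ 2 + 0 ^ 2 + 0 ^ 2) with 0 by ring; apply sqrt_0.
Qed.

Lemma Rabs_coord_le_vnorm m x : Rabs (coord m x) <= vnorm x.
Proof.
  rewrite vnorm_sqnorm, <- sqrt_Rsqr_abs; apply sqrt_le_1_alt.
  unfold Rsqr, sqnorm; destruct m; simpl; nra.
Qed.

Lemma vnorm_le_coords x y : (forall m, Rabs (coord m y) <= Rabs (coord m x)) -> vnorm y <= vnorm x.
Proof.
  intro H; rewrite !vnorm_sqnorm; apply sqrt_le_1_alt; unfold sqnorm.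
  assert (Sq : forall m, coord m y ^ 2 <= coord m x ^ 2).
  { intro m; rewrite <- !Rsqr_pow2; apply Rsqr_le_abs_1, H. }
  generalize (Sq A1) (Sq A2) (Sq A3); lra.
Qed.

Lemma vnorm_le_sum_Rabs x : vnorm x <= Rabs (coord A1 x) + Rabs (coord A2 x) + Rabs (coord A3 x).
Proof.
  pose proof (Rabs_pos (coord A1 x)); pose proof (Rabs_pos (coord A2 x));
    pose proof (Rabs_pos (coord A3 x)).
  rewrite vnorm_sqnorm, <- (sqrt_pow2 (_ + _ + _)) by lra; apply sqrt_le_1_alt; unfold sqnorm.
  rewrite <- (pow2_abs (coord A1 x)), <- (pow2_abs (coord A2 x)), <- (pow2_abs (coord A3 x)); nra.
Qed.

Lemma vnorm_shift_origin i t : vnorm (shift i origin t) = Rabs t.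
Proof.
  rewrite vnorm_sqnorm, sqnorm_shift, !coord_origin, <- sqrt_Rsqr_abs; f_equal.
  unfold Rsqr; destruct i; cbn [kron]; ring.
Qed.

Lemma pd_sqnorm i x : ex_pd i sqnorm x /\ pd i sqnorm x = 2 * coord i x.
Proof.
  apply (pd_line _ _ _ _ _ (sqnorm_shift i x)); auto_derive; [exact I |].
  destruct i; simpl; ring.
Qed.

Definition inv_norm (x : R3) : R := / vnorm x.

Definition unit_coord (k : ax) (x : R3) : R := coord k x * inv_norm x.

Lemma inv_norm_pos x : x <> origin -> 0 < inv_norm x.
Proof. intro Hx; apply Rinv_0_lt_compat, vnorm_pos, Hx. Qed.

Lemma Rabs_unit_coord_le k x : x <> origin -> Rabs (unit_coord k x) <= 1.
Proof.
  intro Hx; pose proof (vnorm_pos x Hx); unfold unit_coord, inv_norm.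
  rewrite Rabs_mult, Rabs_inv, (Rabs_pos_eq (vnorm x)) by lra.
  apply (Rmult_le_reg_r (vnorm x)); [lra |].
  rewrite Rmult_assoc, Rinv_l, Rmult_1_r, Rmult_1_l by lra; apply Rabs_coord_le_vnorm.
Qed.

Lemma C2on_vnorm : C2on punctured vnorm.
Proof.
  apply (C2on_sqrt _ _ open_punctured); [intros x Hx; apply sqnorm_pos, Hx |].
  apply (C2on_ext _ open_punctured (fun y => coord A1 y * coord A1 y + coord A2 y * coord A2 y
                                              + coord A3 y * coord A3 y));
    [intros; cbn [coord]; ring |].
  repeat apply (C2on_plus _ open_punctured); apply (C2on_mult _ open_punctured);
    apply C2on_coord, open_punctured.
Qed.

Lemma C2on_inv_norm : C2on punctured inv_norm.
Proof. apply (C2on_inv _ _ open_punctured); [apply vnorm_pos | apply C2on_vnorm]. Qed.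

Lemma C2on_unit_coord k : C2on punctured (unit_coord k).
Proof.
  apply (C2on_mult _ open_punctured); [apply C2on_coord, open_punctured | apply C2on_inv_norm].
Qed.

Lemma sum_sqr_unit_coord x : x <> origin ->
  unit_coord A1 x ^ 2 + unit_coord A2 x ^ 2 + unit_coord A3 x ^ 2 = 1.
Proof.
  intro Hx; pose proof (vnorm_pos x Hx); unfold unit_coord, inv_norm.
  replace 1 with (sqnorm x / vnorm x ^ 2)
    by (rewrite vnorm_sqnorm, pow2_sqrt by apply Rlt_le, sqnorm_pos, Hx;
        field; apply Rgt_not_eq, sqnorm_pos, Hx).
  unfold sqnorm; field; lra.
Qed.

Ltac fold_vnorm x :=
  rewrite !Rmult_0_l, !Rplus_0_r;
  replace (x1 x * (x1 x * 1) + x2 x * (x2 x * 1) + x3 x * (x3 x * 1)) with (sqnorm x)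
    by (unfold sqnorm; simpl; ring);
  rewrite <- vnorm_sqnorm.

Lemma unit_coord_shift k i x t : unit_coord k (shift i x t) =
  (coord k x + t * kron i k) *
  / sqrt ((coord A1 x + t * kron i A1) ^ 2 + (coord A2 x + t * kron i A2) ^ 2
          + (coord A3 x + t * kron i A3) ^ 2).
Proof. unfold unit_coord, inv_norm; rewrite vnorm_sqnorm, sqnorm_shift, coord_shift; reflexivity. Qed.

Lemma pd_unit_coord i k x : x <> origin ->
  ex_pd i (unit_coord k) x /\
  pd i (unit_coord k) x = inv_norm x * (kron i k - unit_coord k x * unit_coord i x).
Proof.
  intro Hx; pose proof (sqnorm_pos x Hx); pose proof (vnorm_pos x Hx).
  apply (pd_line _ _ _ _ _ (unit_coord_shift k i x)).
  auto_derive; fold_vnorm x.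
  - repeat split; lra.
  - unfold unit_coord, inv_norm; destruct i, k; cbn [kron coord]; field; lra.
Qed.

Lemma inv_norm_shift i x t : inv_norm (shift i x t) =
  / sqrt ((coord A1 x + t * kron i A1) ^ 2 + (coord A2 x + t * kron i A2) ^ 2
          + (coord A3 x + t * kron i A3) ^ 2).
Proof. unfold inv_norm; rewrite vnorm_sqnorm, sqnorm_shift; reflexivity. Qed.

Lemma pd_pd_unit_coord j i k x : x <> origin ->
  ex_pd j (pd i (unit_coord k)) x /\
  pd j (pd i (unit_coord k)) x = inv_norm x ^ 2 *
    (3 * (unit_coord i x * unit_coord j x * unit_coord k x)
     - unit_coord j x * kron i k - unit_coord i x * kron j k - unit_coord k x * kron i j).
Proof.
  intro Hx; pose proof (sqnorm_pos x Hx); pose proof (vnorm_pos x Hx).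
  apply (pd_ext_on_eq _ open_punctured j
           (fun y => inv_norm y * (kron i k - unit_coord k y * unit_coord i y)));
    [exact Hx | intros y Hy; symmetry; apply pd_unit_coord, Hy |].
  eapply pd_line;
    [intro t; rewrite inv_norm_shift, (unit_coord_shift k), (unit_coord_shift i); reflexivity |].
  auto_derive; fold_vnorm x.
  - repeat split; lra.
  - unfold unit_coord, inv_norm; destruct i, j, k; cbn [kron coord]; field; lra.
Qed.

Lemma Rabs_minus_le u v : Rabs (u - v) <= Rabs u + Rabs v.
Proof. unfold Rminus; rewrite <- (Rabs_Ropp v); apply Rabs_triang. Qed.

Lemma Rabs_mult_le a b A B : Rabs a <= A -> Rabs b <= B -> Rabs (a * b) <= A * B.
Proof. intros Ha Hb; rewrite Rabs_mult; apply Rmult_le_compat; auto; apply Rabs_pos. Qed.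

Lemma unit_coord_bounds k x : x <> origin ->
  Rabs (unit_coord k x) <= 1 /\
  (forall i, Rabs (pd i (unit_coord k) x) <= 2 * inv_norm x) /\
  (forall i j, Rabs (pd j (pd i (unit_coord k)) x) <= 6 * inv_norm x ^ 2).
Proof.
  intro Hx; pose proof (inv_norm_pos x Hx) as Hr.
  assert (Ha : forall m, Rabs (unit_coord m x) <= 1) by (intro; apply Rabs_unit_coord_le, Hx).
  assert (Hd : forall i m, Rabs (kron i m) <= 1) by apply Rabs_kron_le.
  assert (Hp : forall a b, Rabs a <= 1 -> Rabs b <= 1 -> Rabs (a * b) <= 1)
    by (intros a b A B; rewrite <- (Rmult_1_r 1); apply Rabs_mult_le; assumption).
  split; [| split]; [apply Ha | intro i | intros i j].
  - rewrite (proj2 (pd_unit_coord i k x Hx)), Rabs_mult, (Rabs_pos_eq (inv_norm x)) by lra.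
    rewrite Rmult_comm; apply Rmult_le_compat_r; [lra |].
    pose proof (Rabs_minus_le (kron i k) (unit_coord k x * unit_coord i x)).
    pose proof (Hd i k); pose proof (Hp _ _ (Ha k) (Ha i)); lra.
  - rewrite (proj2 (pd_pd_unit_coord j i k x Hx)), Rabs_mult, (Rabs_pos_eq (inv_norm x ^ 2)) by nra.
    rewrite Rmult_comm; apply Rmult_le_compat_r; [nra |].
    pose proof (Hp _ _ (Hp _ _ (Ha i) (Ha j)) (Ha k)).
    pose proof (Hp _ _ (Ha j) (Hd i k)); pose proof (Hp _ _ (Ha i) (Hd j k));
      pose proof (Hp _ _ (Ha k) (Hd i j)).
    set (a := unit_coord i x) in *; set (b := unit_coord j x) in *; set (c := unit_coord k x) in *.
    pose proof (Rabs_minus_le (3 * (a * b * c) - b * kron i k - a * kron j k) (c * kron i j)).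
    pose proof (Rabs_minus_le (3 * (a * b * c) - b * kron i k) (a * kron j k)).
    pose proof (Rabs_minus_le (3 * (a * b * c)) (b * kron i k)).
    assert (Rabs (3 * (a * b * c)) <= 3) by (rewrite Rabs_mult, (Rabs_pos_eq 3) by lra; lra).
    lra.
Qed.

(** * Functions flat at the origin *)

Lemma ball_origin_of_vnorm d y : vnorm y < d -> ball origin d y.
Proof.
  intro H; apply ball_R3; intro m; rewrite coord_origin, Rminus_0_r.
  eapply Rle_lt_trans; [apply Rabs_coord_le_vnorm | exact H].
Qed.

Lemma vnorm_of_ball_origin d y : ball origin d y -> vnorm y < 3 * d.
Proof.
  intro H; pose proof (proj1 (ball_R3 _ _ _) H) as Hm.
  assert (B : forall m, Rabs (coord m y) < d)
    by (intro m; specialize (Hm m); rewrite coord_origin, Rminus_0_r in Hm; exact Hm).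
  pose proof (vnorm_le_sum_Rabs y); generalize (B A1) (B A2) (B A3); lra.
Qed.

Lemma locally'_origin_iff (P : R3 -> Prop) :
  locally' origin P <-> exists d, 0 < d /\ forall y, y <> origin -> vnorm y < d -> P y.
Proof.
  split.
  - intros [d Hd]; exists d; split; [apply cond_pos |].
    intros y Hy Hn; apply Hd; [apply ball_origin_of_vnorm |]; assumption.
  - intros [d [Hd H]].
    assert (Hd3 : 0 < d / 3) by lra.
    exists (mkposreal _ Hd3); intros y Hb Hy; apply H; [exact Hy |].
    pose proof (vnorm_of_ball_origin _ _ Hb); simpl in *; lra.
Qed.

Lemma filter_forall_ax {T} (F : (T -> Prop) -> Prop) {FF : Filter F} (P : ax -> T -> Prop) :
  (forall i, F (P i)) -> F (fun y => forall i, P i y).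
Proof.
  intro H; generalize (filter_and _ _ (H A1) (filter_and _ _ (H A2) (H A3))).
  apply filter_imp; intros y [H1 [H2 H3]] []; assumption.
Qed.

Definition little_o_origin (n : nat) (f : R3 -> R) : Prop :=
  forall eps, 0 < eps -> locally' origin (fun y => Rabs (f y) <= eps * vnorm y ^ n).

Lemma little_o_of_filterlim f :
  filterlim f (locally' origin) (locally 0) -> little_o_origin 0 f.
Proof.
  intros H eps Heps; apply (filter_imp (fun y => ball 0 eps (f y))).
  - intros y Hy; change (Rabs (f y - 0) < eps) in Hy; rewrite Rminus_0_r in Hy; simpl; lra.
  - exact (proj1 (filterlim_locally f 0) H (mkposreal _ Heps)).
Qed.

Lemma little_o_pred n f : little_o_origin (S n) f -> little_o_origin n f.
Proof.
  intros H eps Heps; apply (filter_imp (fun y => Rabs (f y) <= eps * vnorm y ^ S n /\ vnorm y < 1)).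
  - intros y [Hf Hy]; eapply Rle_trans; [exact Hf |].
    pose proof (vnorm_ge0 y); pose proof (pow_le (vnorm y) n (vnorm_ge0 y)).
    simpl; apply Rmult_le_compat_l; [lra |]; nra.
  - apply filter_and; [apply H, Heps |].
    apply locally'_origin_iff; exists 1; split; [lra | auto].
Qed.

Lemma continuous_origin f : f origin = 0 -> little_o_origin 0 f -> continuous f origin.
Proof.
  intros H0 Ho; apply filterlim_locally; intro eps.
  assert (He : 0 < eps / 2) by (destruct eps; simpl; lra).
  destruct (proj1 (locally'_origin_iff _) (Ho _ He)) as [d [Hd B]].
  assert (Hd3 : 0 < d / 3) by lra.
  exists (mkposreal _ Hd3); intros y Hy.
  destruct (origin_dec y) as [-> | Hn]; [apply ball_center |].
  change (Rabs (f y - f origin) < eps); rewrite H0, Rminus_0_r.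
  assert (Hv : vnorm y < d) by (pose proof (vnorm_of_ball_origin _ _ Hy); simpl in *; lra).
  pose proof (B y Hn Hv); simpl in *; lra.
Qed.

Lemma pd_origin_zero i f : f origin = 0 -> little_o_origin 1 f ->
  ex_pd i f origin /\ pd i f origin = 0.
Proof.
  intros H0 Ho.
  assert (D : is_derive (fun t => f (shift i origin t)) 0 0).
  { apply is_derive_Reals; intros eps Heps.
    assert (He : 0 < eps / 2) by lra.
    destruct (proj1 (locally'_origin_iff _) (Ho _ He)) as [d [Hd B]].
    exists (mkposreal _ Hd); intros t Ht Htd; simpl in Htd.
    rewrite Rplus_0_l, shift0, H0, !Rminus_0_r.
    pose proof (B (shift i origin t) (shift_origin_neq i t Ht)) as Bt.
    rewrite vnorm_shift_origin, pow_1 in Bt.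
    pose proof (Rabs_pos_lt t Ht).
    unfold Rdiv; rewrite Rabs_mult, Rabs_inv.
    apply (Rmult_lt_reg_r (Rabs t)); [lra |].
    rewrite Rmult_assoc, Rinv_l, Rmult_1_r by lra.
    specialize (Bt Htd); nra. }
  split; [eexists; exact D | exact (is_derive_unique _ _ _ D)].
Qed.

Lemma mvt_bound (g : R -> R) (a K : R) :
  (forall t, Rmin 0 a <= t <= Rmax 0 a -> continuous g t) ->
  (forall t, Rmin 0 a < t < Rmax 0 a -> ex_derive g t /\ Rabs (Derive g t) <= K) ->
  0 <= K -> Rabs (g a - g 0) <= K * Rabs a.
Proof.
  intros C D HK.
  (* [MVT_gen] may return an endpoint, where [g] need not be differentiable: [dg] is [Derive g]
     inside the interval and [0] at its ends. *)
  set (dg t := if Rlt_dec (Rmin 0 a) t then if Rlt_dec t (Rmax 0 a) then Derive g t else 0 else 0).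
  destruct (MVT_gen g 0 a dg) as [c [Hc E]].
  - intros t Ht; unfold dg.
    destruct (Rlt_dec (Rmin 0 a) t); [| lra]; destruct (Rlt_dec t (Rmax 0 a)); [| lra].
    apply Derive_correct, D; auto.
  - intros t Ht; apply continuity_pt_filterlim, C, Ht.
  - rewrite E, Rminus_0_r, Rabs_mult; apply Rmult_le_compat_r; [apply Rabs_pos |].
    unfold dg; destruct (Rlt_dec (Rmin 0 a) c); [| rewrite Rabs_R0; lra].
    destruct (Rlt_dec c (Rmax 0 a)); [apply D; auto | rewrite Rabs_R0; lra].
Qed.

Lemma mvt_segment F i p x K : (forall y, continuous F y) -> 0 <= K ->
  coord i p = 0 -> (forall m, Rabs (coord m p) <= Rabs (coord m x)) ->
  (forall j y, y <> origin -> vnorm y <= vnorm x -> ex_pd j F y /\ Rabs (pd j F y) <= K) ->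
  Rabs (F (shift i p (coord i x)) - F p) <= K * vnorm x.
Proof.
  intros C HK Hp Hpx D.
  eapply Rle_trans; [| apply Rmult_le_compat_l; [exact HK | apply (Rabs_coord_le_vnorm i x)]].
  rewrite <- (shift0 i p) at 2.
  apply (mvt_bound (fun t => F (shift i p t))); [| | exact HK].
  - intros t _; apply (continuous_comp (shift i p) F); [apply continuous_shift | apply C].
  - intros t Ht.
    assert (Hti : t <> 0 /\ Rabs t <= Rabs (coord i x)).
    { revert Ht; unfold Rmin, Rmax; destruct (Rle_dec 0 (coord i x));
        intro; split; try lra; unfold Rabs; destruct (Rcase_abs t), (Rcase_abs (coord i x)); lra. }
    assert (Hy : shift i p t <> origin).
    { intro E; apply (f_equal (coord i)) in E.
      rewrite coord_shift, coord_origin, Hp in E; destruct i; cbn [kron] in E; lra. }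
    assert (Hyx : vnorm (shift i p t) <= vnorm x).
    { apply vnorm_le_coords; intro m; rewrite coord_shift.
      destruct i, m; cbn [kron]; rewrite ?Rmult_0_r, ?Rplus_0_r, ?Rmult_1_r;
        first [apply Hpx | rewrite Hp, Rplus_0_l; apply Hti]. }
    destruct (D i _ Hy Hyx) as [E B].
    pose proof (pd_correct i F p t E) as L.
    split; [eexists; exact L |].
    replace (Derive _ t) with (pd i F (shift i p t)) by (symmetry; apply is_derive_unique, L); exact B.
Qed.

Lemma mvt_origin F x K : (forall y, continuous F y) -> 0 <= K ->
  (forall j y, y <> origin -> vnorm y <= vnorm x -> ex_pd j F y /\ Rabs (pd j F y) <= K) ->
  Rabs (F x - F origin) <= 3 * K * vnorm x.
Proof.
  intros C HK D.
  set (p1 := shift A1 origin (coord A1 x)); set (p2 := shift A2 p1 (coord A2 x)).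
  assert (P1 : forall m, coord m p1 = coord A1 x * kron A1 m)
    by (intro m; unfold p1; rewrite coord_shift, coord_origin; ring).
  assert (P2 : forall m, coord m p2 = coord A1 x * kron A1 m + coord A2 x * kron A2 m)
    by (intro m; unfold p2; rewrite coord_shift, P1; ring).
  assert (Ex : shift A3 p2 (coord A3 x) = x)
    by (apply R3_ext; intro m; rewrite coord_shift, P2; destruct m; cbn [kron]; ring).
  assert (Dom : forall p, (forall m, coord m p = 0 \/ coord m p = coord m x) ->
                  forall m, Rabs (coord m p) <= Rabs (coord m x)).
  { intros p Hp m; destruct (Hp m) as [-> | ->]; [rewrite Rabs_R0; apply Rabs_pos | lra]. }
  assert (D0 : forall m, Rabs (coord m origin) <= Rabs (coord m x))
    by (apply Dom; left; apply coord_origin).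
  assert (D1 : forall m, Rabs (coord m p1) <= Rabs (coord m x))
    by (apply Dom; intro m; rewrite P1; destruct m; cbn [kron]; [right | left | left]; ring).
  assert (D2 : forall m, Rabs (coord m p2) <= Rabs (coord m x))
    by (apply Dom; intro m; rewrite P2; destruct m; cbn [kron]; [right | right | left]; ring).
  assert (Z1 : coord A2 p1 = 0) by (rewrite P1; cbn [kron]; ring).
  assert (Z2 : coord A3 p2 = 0) by (rewrite P2; cbn [kron]; ring).
  pose proof (mvt_segment F A1 origin x K C HK (coord_origin A1) D0 D) as S1.
  pose proof (mvt_segment F A2 p1 x K C HK Z1 D1 D) as S2.
  pose proof (mvt_segment F A3 p2 x K C HK Z2 D2 D) as S3.
  fold p1 in S1; fold p2 in S2; rewrite Ex in S3.
  replace (F x - F origin) with ((F x - F p2) + (F p2 - F p1) + (F p1 - F origin)) by ring.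
  pose proof (Rabs_triang (F x - F p2 + (F p2 - F p1)) (F p1 - F origin)).
  pose proof (Rabs_triang (F x - F p2) (F p2 - F p1)); lra.
Qed.

Lemma little_o_integrate n f : (forall y, continuous f y) -> f origin = 0 ->
  C1on punctured f -> (forall i, little_o_origin n (pd i f)) -> little_o_origin (S n) f.
Proof.
  intros C H0 Cf Ho eps Heps.
  assert (He : 0 < eps / 3) by lra.
  destruct (proj1 (locally'_origin_iff _) (filter_forall_ax _ _ (fun i => Ho i _ He)))
    as [d [Hd B]].
  apply locally'_origin_iff; exists d; split; [exact Hd |]; intros x Hx Hxd.
  pose proof (vnorm_ge0 x) as Hn0; pose proof (pow_le _ n Hn0).
  replace (f x) with (f x - f origin) by (rewrite H0; ring).
  eapply Rle_trans; [apply (mvt_origin f x (eps / 3 * vnorm x ^ n) C) |].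
  - apply Rmult_le_pos; lra.
  - intros j y Hy Hyx; split; [apply (Cf y Hy) |].
    eapply Rle_trans; [apply B; [exact Hy | lra] |].
    apply Rmult_le_compat_l; [lra | apply pow_incr; split; [apply vnorm_ge0 | exact Hyx]].
  - simpl; lra.
Qed.

Definition flat_at_origin (h : R3 -> R) : Prop :=
  C2on punctured h /\ h origin = 0 /\ C2_to_zero_at_origin h.

Lemma flat_little_o h : flat_at_origin h ->
  little_o_origin 2 h /\ (forall i, little_o_origin 1 (pd i h)) /\
  (forall i j, little_o_origin 0 (pd j (pd i h))).
Proof.
  intros [[C1 C2] [H0 [L0 [L1 L2]]]].
  assert (Ch : forall y, continuous h y).
  { intro y; destruct (origin_dec y) as [-> | Hy];
      [apply continuous_origin, little_o_of_filterlim; assumption | apply (C1 y Hy)]. }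
  assert (O1 : little_o_origin 1 h)
    by (apply little_o_integrate; auto; intro j; apply little_o_of_filterlim, L1).
  assert (Cd : forall i y, continuous (pd i h) y).
  { intros i y; destruct (origin_dec y) as [-> | Hy]; [| apply (C1 y Hy)].
    apply continuous_origin; [apply pd_origin_zero; assumption | apply little_o_of_filterlim, L1]. }
  assert (Od : forall i, little_o_origin 1 (pd i h)).
  { intro i; apply little_o_integrate; [apply Cd | apply pd_origin_zero; assumption | apply C2 |].
    intro j; apply little_o_of_filterlim, L2. }
  split; [| split]; [apply little_o_integrate; auto | exact Od |].
  intros i j; apply little_o_of_filterlim, L2.
Qed.

Lemma isC2_of_little_o w : C2on punctured w -> w origin = 0 ->
  little_o_origin 2 w -> (forall i, little_o_origin 1 (pd i w)) ->
  (forall i j, little_o_origin 0 (pd j (pd i w))) -> isC2 w.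
Proof.
  intros [C1 C2] H0 O2 O1 O0.
  assert (D1 : forall i, ex_pd i w origin /\ pd i w origin = 0)
    by (intro i; apply pd_origin_zero; [exact H0 | apply little_o_pred, O2]).
  assert (D2 : forall i j, ex_pd j (pd i w) origin /\ pd j (pd i w) origin = 0)
    by (intros i j; apply pd_origin_zero; [apply D1 | apply O1]).
  apply isC2_C2on; split; [intros x _ | intros i x _]; destruct (origin_dec x) as [-> | Hx].
  - split; [apply continuous_origin; [exact H0 | apply little_o_pred, little_o_pred, O2] |].
    intro i; split; [apply D1 | apply continuous_origin; [apply D1 | apply little_o_pred, O1]].
  - apply C1, Hx.
  - split; [apply continuous_origin; [apply D1 | apply little_o_pred, O1] |].
    intro j; split; [apply D2 | apply continuous_origin; [apply D2 | apply O0]].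
  - apply C2, Hx.
Qed.

Lemma mul_unit_coord_bounds h k y e : C2on punctured h -> y <> origin ->
  Rabs (h y) <= e * vnorm y ^ 2 -> (forall i, Rabs (pd i h y) <= e * vnorm y) ->
  (forall i j, Rabs (pd j (pd i h) y) <= e) ->
  Rabs (h y * unit_coord k y) <= e * vnorm y ^ 2 /\
  (forall i, Rabs (pd i (fun z => h z * unit_coord k z) y) <= 3 * e * vnorm y) /\
  (forall i j, Rabs (pd j (pd i (fun z => h z * unit_coord k z)) y) <= 11 * e).
Proof.
  intros Ch Hy B0 B1 B2.
  destruct (unit_coord_bounds k y Hy) as [U0 [U1 U2]].
  pose proof (vnorm_pos y Hy) as Hr; pose proof (inv_norm_pos y Hy) as Hi.
  assert (Hri : vnorm y * inv_norm y = 1) by (apply Rinv_r; lra).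
  assert (He : 0 <= e).
  { pose proof (Rabs_pos (h y)); pose proof (pow_lt _ 2 Hr).
    destruct (Rle_or_lt 0 e) as [? | Hn]; [assumption | nra]. }
  set (r := vnorm y) in *; set (q := inv_norm y) in *.
  split; [| split].
  - rewrite <- (Rmult_1_r (e * r ^ 2)); apply Rabs_mult_le; assumption.
  - intro i.
    rewrite (proj2 (pd_mult i h (unit_coord k) y (C1on_ex_pd _ _ _ _ (proj1 Ch) Hy)
                      (C1on_ex_pd _ _ _ _ (proj1 (C2on_unit_coord k)) Hy))).
    pose proof (Rabs_mult_le _ _ _ _ (B1 i) U0); pose proof (Rabs_mult_le _ _ _ _ B0 (U1 i)).
    pose proof (Rabs_triang (pd i h y * unit_coord k y) (h y * pd i (unit_coord k) y)).
    replace (e * r ^ 2 * (2 * q)) with (2 * e * r * (r * q)) in * by ring.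
    rewrite Hri in *; lra.
  - intros i j.
    rewrite (pd_pd_mult punctured open_punctured i j h (unit_coord k) y Ch (C2on_unit_coord k) Hy).
    pose proof (Rabs_mult_le _ _ _ _ (B2 i j) U0); pose proof (Rabs_mult_le _ _ _ _ (B1 i) (U1 j));
      pose proof (Rabs_mult_le _ _ _ _ (B1 j) (U1 i)); pose proof (Rabs_mult_le _ _ _ _ B0 (U2 i j)).
    pose proof (Rabs_triang (pd j (pd i h) y * unit_coord k y + pd i h y * pd j (unit_coord k) y
                             + pd j h y * pd i (unit_coord k) y) (h y * pd j (pd i (unit_coord k)) y)).
    pose proof (Rabs_triang (pd j (pd i h) y * unit_coord k y + pd i h y * pd j (unit_coord k) y)
                            (pd j h y * pd i (unit_coord k) y)).
    pose proof (Rabs_triang (pd j (pd i h) y * unit_coord k y) (pd i h y * pd j (unit_coord k) y)).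
    replace (e * r * (2 * q)) with (2 * e * (r * q)) in * by ring.
    replace (e * r ^ 2 * (6 * q ^ 2)) with (6 * e * (r * q) ^ 2) in * by ring.
    rewrite Hri in *; lra.
Qed.

Lemma isC2_flat_mul_unit_coord h k : flat_at_origin h -> isC2 (fun y => h y * unit_coord k y).
Proof.
  intro Hh; pose proof Hh as [Ch [H0 _]].
  destruct (flat_little_o h Hh) as [O2 [O1 O0]].
  set (w := fun y => h y * unit_coord k y).
  assert (B : forall eps, 0 < eps -> locally' origin (fun y =>
    Rabs (w y) <= eps * vnorm y ^ 2 /\ (forall i, Rabs (pd i w y) <= 3 * eps * vnorm y) /\
    (forall i j, Rabs (pd j (pd i w) y) <= 11 * eps))).
  { intros eps Heps.
    assert (Hn : locally' origin (fun y => y <> origin))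
      by (apply (filter_forall (F := locally origin)); intros y Hy; exact Hy).
    generalize (filter_and _ _ Hn (filter_and _ _ (O2 _ Heps)
      (filter_and _ _ (filter_forall_ax _ _ (fun i => O1 i _ Heps))
         (filter_forall_ax _ _ (fun i => filter_forall_ax _ _ (fun j => O0 i j _ Heps)))))).
    apply filter_imp; intros y [Hy [B0 [B1 B2]]].
    apply mul_unit_coord_bounds; [exact Ch | exact Hy | exact B0 | intro i | intros i j].
    - specialize (B1 i); simpl in B1; lra.
    - specialize (B2 i j); simpl in B2; lra. }
  apply isC2_of_little_o.
  - apply (C2on_mult _ open_punctured); [exact Ch | apply C2on_unit_coord].
  - unfold w; rewrite H0; ring.
  - intros eps Heps; generalize (B _ Heps); apply filter_imp; intros y [H _]; exact H.
  - intros i eps Heps; assert (He : 0 < eps / 3) by lra.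
    generalize (B _ He); apply filter_imp; intros y [_ [H _]]; specialize (H i); simpl; lra.
  - intros i j eps Heps; assert (He : 0 < eps / 11) by lra.
    generalize (B _ He); apply filter_imp; intros y [_ [_ H]]; specialize (H i j); simpl; lra.
Qed.

(** * Curl-free phased fields *)

Lemma radial_profile_derivable G x : (forall i y, y <> origin -> ex_pd i G y) -> x <> origin ->
  ex_derive (fun s => G (shift A1 origin (sqrt s))) (sqnorm x).
Proof.
  intros D Hx; pose proof (vnorm_pos x Hx) as Hr.
  set (p0 := shift A1 origin (vnorm x)).
  assert (Hp0 : p0 <> origin)
    by (intro E; apply (f_equal (coord A1)) in E; unfold p0 in E;
        rewrite coord_shift, !coord_origin in E; cbn [kron] in E; lra).
  apply (ex_derive_ext (fun s => G (shift A1 p0 (sqrt s - vnorm x)))).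
  { intro s; unfold p0; rewrite shift_shift; do 3 f_equal; ring. }
  apply (ex_derive_comp (fun u => G (shift A1 p0 u)) (fun s => sqrt s - vnorm x)).
  - replace (sqrt (sqnorm x) - vnorm x) with 0 by (rewrite vnorm_sqnorm; ring); apply D, Hp0.
  - auto_derive; apply sqnorm_pos, Hx.
Qed.

Lemma radial_pd_coord G x j k : radial G -> (forall i y, y <> origin -> ex_pd i G y) ->
  x <> origin -> pd j G x * coord k x = pd k G x * coord j x.
Proof.
  intros RG D Hx.
  set (Phi s := G (shift A1 origin (sqrt s))).
  assert (EG : forall y, G y = Phi (sqnorm y)).
  { intro y; apply RG; unfold Phi.
    rewrite vnorm_shift_origin, Rabs_pos_eq by apply sqrt_pos; reflexivity. }
  destruct (radial_profile_derivable G x D Hx) as [l Hl].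
  assert (P : forall m, pd m G x = l * (2 * coord m x)).
  { intro m; rewrite (proj1 (pd_ext_loc m G (fun y => Phi (sqnorm y)) x (filter_forall _ EG))).
    rewrite <- (proj2 (pd_sqnorm m x)).
    exact (proj2 (pd_comp m Phi l sqnorm x Hl (proj1 (pd_sqnorm m x)))). }
  rewrite !P; ring.
Qed.

Lemma pd_mul_coord_origin G j k : kron j k = 0 ->
  pd j (fun y => G y * coord k y) origin = 0.
Proof.
  intro H; unfold pd; rewrite (Derive_ext _ (fun _ => 0)); [apply Derive_const |].
  intro t; rewrite coord_shift, H, coord_origin; ring.
Qed.

Lemma radial_field_pd_sym G j k x : radial G -> C1on punctured G ->
  pd j (fun y => G y * coord k y) x = pd k (fun y => G y * coord j y) x.
Proof.
  intros RG CG; destruct (origin_dec x) as [-> | Hx].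
  - destruct j, k; try reflexivity; rewrite !pd_mul_coord_origin; reflexivity.
  - assert (D : forall i y, y <> origin -> ex_pd i G y) by (intros i y Hy; apply (CG y Hy)).
    rewrite (proj2 (pd_mult j G (coord k) x (D j x Hx) (proj1 (pd_coord j k x)))),
            (proj2 (pd_mult k G (coord j) x (D k x Hx) (proj1 (pd_coord k j x)))),
            (proj2 (pd_coord j k x)), (proj2 (pd_coord k j x)), kron_sym,
            (radial_pd_coord G x j k RG D Hx).
    reflexivity.
Qed.

Definition phased (theta : R) (u : ax -> R3 -> R) (x : R3) : C3 :=
  ((cos theta * u A1 x, sin theta * u A1 x),
   (cos theta * u A2 x, sin theta * u A2 x),
   (cos theta * u A3 x, sin theta * u A3 x)).

Lemma comp_phased theta u k x : comp k (phased theta u x) = (cos theta * u k x, sin theta * u k x).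
Proof. destruct k; reflexivity. Qed.

Lemma monochromatic_phased T theta u x t :
  monochromatic T (phased theta u) x t = phased (2 * PI / T * t + theta) u x.
Proof.
  unfold monochromatic, phased, Cmult; simpl; rewrite cos_plus, sin_plus.
  f_equal; [f_equal |]; f_equal; ring.
Qed.

Lemma Cmod_phase theta v : Cmod (cos theta * v, sin theta * v) = Rabs v.
Proof.
  unfold Cmod; cbn [fst snd]; rewrite <- sqrt_Rsqr_abs; f_equal.
  rewrite <- (Rmult_1_l (Rsqr v)), <- (sin2_cos2 theta); unfold Rsqr; ring.
Qed.

Lemma c3norm_phased theta u x :
  c3norm (phased theta u x) = sqrt (u A1 x ^ 2 + u A2 x ^ 2 + u A3 x ^ 2).
Proof. unfold c3norm; rewrite !comp_phased, !Cmod_phase, !pow2_abs; reflexivity. Qed.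

Lemma isC2_field_phased theta u : (forall k, isC2 (u k)) -> isC2_field (phased theta u).
Proof.
  intros C k; split; apply isC2_C2on.
  - apply (C2on_ext _ open_true (fun y => cos theta * u k y));
      [intros y _; rewrite comp_phased; reflexivity |].
    apply C2on_scal; [apply open_true | apply isC2_C2on, C].
  - apply (C2on_ext _ open_true (fun y => sin theta * u k y));
      [intros y _; rewrite comp_phased; reflexivity |].
    apply C2on_scal; [apply open_true | apply isC2_C2on, C].
Qed.

Lemma phased_inj theta1 theta2 u k x : 0 < u k x ->
  0 <= theta1 <= PI -> 0 <= theta2 <= PI -> phased theta1 u = phased theta2 u -> theta1 = theta2.
Proof.
  intros Hu H1 H2 E; apply (f_equal (fun F => Re (comp k (F x)))) in E.
  rewrite !comp_phased in E; simpl in E.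
  apply cos_inj; [exact H1 | exact H2 |]; apply (Rmult_eq_reg_r (u k x)); [exact E | lra].
Qed.

Lemma Cminus_diag (z : C) : Cminus z z = RtoC 0.
Proof. destruct z as [a b]; unfold Cminus, Cplus, Copp, RtoC; simpl; f_equal; ring. Qed.

Lemma pdC_phased i theta u k x :
  pdC i (fun y => comp k (phased theta u y)) x = (cos theta * pd i (u k) x, sin theta * pd i (u k) x).
Proof. destruct k; unfold pdC; simpl; rewrite !pd_scal; reflexivity. Qed.

Lemma curl_phased theta u : (forall j k x, pd j (u k) x = pd k (u j) x) ->
  forall x, curl (phased theta u) x = (RtoC 0, RtoC 0, RtoC 0).
Proof.
  intros Sym x; unfold curl; rewrite !pdC_phased, (Sym A2 A3 x), (Sym A3 A1 x), (Sym A1 A2 x).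
  rewrite !Cminus_diag; reflexivity.
Qed.

Lemma curl_const (c : C3) x : curl (fun _ => c) x = (RtoC 0, RtoC 0, RtoC 0).
Proof. unfold curl, pdC; rewrite !(proj2 (pd_const _ _ x)), !Cminus_diag; reflexivity. Qed.

Lemma Derive2_cos_phase w theta c t :
  Derive_n (fun tau => cos (w * tau + theta) * c) 2 t = - w ^ 2 * (cos (w * t + theta) * c).
Proof.
  simpl; rewrite (Derive_ext _ (fun tau => - w * sin (w * tau + theta) * c)).
  - apply is_derive_unique; auto_derive; [exact I | ring].
  - intro tau; apply is_derive_unique; auto_derive; [exact I | ring].
Qed.

Lemma Derive2_sin_phase w theta c t :
  Derive_n (fun tau => sin (w * tau + theta) * c) 2 t = - w ^ 2 * (sin (w * t + theta) * c).
Proof.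
  simpl; rewrite (Derive_ext _ (fun tau => w * cos (w * tau + theta) * c)).
  - apply is_derive_unique; auto_derive; [exact I | ring].
  - intro tau; apply is_derive_unique; auto_derive; [exact I | ring].
Qed.

Lemma solves_phased sigma p s q V T theta u :
  (forall j k x, pd j (u k) x = pd k (u j) x) ->
  (forall k x, (- (2 * PI / T) ^ 2 * s x + q x +
                sigma * V x * rpow (sqrt (u A1 x ^ 2 + u A2 x ^ 2 + u A3 x ^ 2)) (p - 1))
               * u k x = 0) ->
  solves sigma p s q V (monochromatic T (phased theta u)).
Proof.
  intros Sym Hu x t k.
  assert (Ew : (fun y => monochromatic T (phased theta u) y t) = phased (2 * PI / T * t + theta) u)
    by (apply functional_extensionality; intro y; apply monochromatic_phased).
  assert (Ec : curl (phased (2 * PI / T * t + theta) u) = fun _ => (RtoC 0, RtoC 0, RtoC 0))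
    by (apply functional_extensionality, curl_phased, Sym).
  unfold d2t; rewrite Ew, Ec, curl_const, !monochromatic_phased, c3norm_phased, comp_phased.
  rewrite (Derive_n_ext _ (fun tau => cos (2 * PI / T * tau + theta) * u k x))
    by (intro; rewrite monochromatic_phased, comp_phased; reflexivity).
  rewrite (Derive_n_ext (fun tau => Im _) (fun tau => sin (2 * PI / T * tau + theta) * u k x))
    by (intro; rewrite monochromatic_phased, comp_phased; reflexivity).
  rewrite Derive2_cos_phase, Derive2_sin_phase.
  specialize (Hu k x); set (a := - (2 * PI / T) ^ 2 * s x + q x + _) in Hu.
  replace (comp k (RtoC 0, RtoC 0, RtoC 0)) with (RtoC 0) by (destruct k; reflexivity).
  unfold Cmult, Cplus, RtoC; cbn [fst snd]; f_equal.
  - transitivity (cos (2 * PI / T * t + theta) * (a * u k x)); [unfold a; ring | rewrite Hu; ring].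
  - transitivity (sin (2 * PI / T * t + theta) * (a * u k x)); [unfold a; ring | rewrite Hu; ring].
Qed.

(** * The breathers *)

Lemma radial_bounded_on_ball f r : radial f -> (forall x, continuous f x) -> 0 <= r ->
  exists M, forall x, vnorm x <= r -> f x <= M.
Proof.
  intros Rf Cf Hr.
  destruct (continuity_ab_maj (fun t => f (shift A1 origin t)) 0 r Hr) as [t [Ht _]].
  { intros t _; apply continuity_pt_filterlim, (continuous_comp (shift A1 origin) f);
      [apply continuous_shift | apply Cf]. }
  exists (f (shift A1 origin t)); intros x Hx.
  rewrite (Rf x (shift A1 origin (vnorm x)))
    by (rewrite vnorm_shift_origin, Rabs_pos_eq by apply vnorm_ge0; reflexivity).
  apply Ht; split; [apply vnorm_ge0 | exact Hx].
Qed.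

Section Breather.

Variables (p : R) (s q V : R3 -> R).
Hypothesis p_gt1 : 1 < p.
Hypotheses (s_pos : forall x, 0 < s x) (q_pos : forall x, 0 < q x) (V_pos : forall x, 0 < V x).
Hypotheses (s_radial : radial s) (q_radial : radial q) (V_radial : radial V).
Hypotheses (s_C2 : isC2 s) (q_C2 : isC2 q) (V_C2 : isC2 V).

Definition tau (x : R3) : R := period s q * sqrt (q x / s x).

Definition detuning (x : R3) : R := 2 * PI - tau x.

Definition profile (x : R3) : R := rpow (Rabs (detuning x)) (1 / (p - 1)).

Definition gain (x : R3) : R := s x * (2 * PI + tau x) / (period s q ^ 2 * V x).

Definition amplitude (x : R3) : R := rpow (gain x) (1 / (p - 1)) * profile x.

Definition breather_coord (k : ax) (x : R3) : R :=
  rpow (gain x) (1 / (p - 1)) * (profile x * unit_coord k x).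

Lemma period_pos : 0 < period s q.
Proof.
  pose proof PI_RGT_0; pose proof (s_pos origin); pose proof (q_pos origin).
  unfold period; apply Rmult_lt_0_compat; [lra | apply sqrt_lt_R0, Rdiv_lt_0_compat; assumption].
Qed.

Lemma tau_pos x : 0 < tau x.
Proof.
  pose proof (s_pos x); pose proof (q_pos x); pose proof period_pos.
  apply Rmult_lt_0_compat; [lra | apply sqrt_lt_R0, Rdiv_lt_0_compat; assumption].
Qed.

Lemma tau_sqr x : tau x ^ 2 = period s q ^ 2 * (q x / s x).
Proof.
  pose proof (s_pos x); pose proof (q_pos x).
  unfold tau; rewrite Rpow_mult_distr, pow2_sqrt; [reflexivity |].
  apply Rlt_le, Rdiv_lt_0_compat; assumption.
Qed.

Lemma detuning_origin : detuning origin = 0.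
Proof.
  pose proof (s_pos origin); pose proof (q_pos origin).
  unfold detuning, tau, period; rewrite Rmult_assoc, <- sqrt_mult.
  - replace (s origin / q origin * (q origin / s origin)) with 1 by (field; lra).
    rewrite sqrt_1; ring.
  - apply Rlt_le, Rdiv_lt_0_compat; assumption.
  - apply Rlt_le, Rdiv_lt_0_compat; assumption.
Qed.

Lemma gain_pos x : 0 < gain x.
Proof.
  pose proof (s_pos x); pose proof (V_pos x); pose proof (tau_pos x); pose proof period_pos;
    pose proof PI_RGT_0.
  unfold gain; apply Rdiv_lt_0_compat; [nra | apply Rmult_lt_0_compat; [nra | assumption]].
Qed.

Lemma dispersion_relation x :
  (2 * PI / period s q) ^ 2 * s x - q x = V x * gain x * detuning x.
Proof.
  pose proof (s_pos x); pose proof (V_pos x); pose proof period_pos.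
  unfold gain, detuning.
  replace (V x * (s x * (2 * PI + tau x) / (period s q ^ 2 * V x)) * (2 * PI - tau x))
    with ((2 * PI / period s q) ^ 2 * s x - s x * tau x ^ 2 / period s q ^ 2) by (field; lra).
  rewrite tau_sqr; field; lra.
Qed.

Lemma C2on_tau : C2on (fun _ => True) tau.
Proof.
  apply (C2on_scal _ open_true), (C2on_sqrt _ _ open_true);
    [intros x _; apply Rdiv_lt_0_compat; auto |].
  apply (C2on_mult _ open_true); [apply isC2_C2on, q_C2 |].
  apply (C2on_inv _ _ open_true); [auto | apply isC2_C2on, s_C2].
Qed.

Lemma C2on_gain : C2on (fun _ => True) gain.
Proof.
  apply (C2on_mult _ open_true).
  - apply (C2on_mult _ open_true); [apply isC2_C2on, s_C2 |].
    apply (C2on_plus _ open_true); [apply C2on_const, open_true | apply C2on_tau].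
  - apply (C2on_inv _ _ open_true).
    + intros x _; pose proof period_pos; pose proof (V_pos x); apply Rmult_lt_0_compat; [nra | auto].
    + apply (C2on_scal _ open_true), isC2_C2on, V_C2.
Qed.

Lemma C2on_gain_rpow : C2on (fun _ => True) (fun x => rpow (gain x) (1 / (p - 1))).
Proof. apply (C2on_rpow _ _ _ open_true); [intros x _; apply gain_pos | apply C2on_gain]. Qed.

Lemma radial_gain : radial gain.
Proof.
  intros x y E; unfold gain, tau; rewrite (s_radial x y E), (q_radial x y E), (V_radial x y E).
  reflexivity.
Qed.

Lemma C2on_detuning : C2on (fun _ => True) detuning.
Proof.
  apply (C2on_ext _ open_true (fun x => 2 * PI + -1 * tau x)); [intros; unfold detuning; ring |].
  apply (C2on_plus _ open_true);
    [apply C2on_const, open_true | apply (C2on_scal _ open_true), C2on_tau].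
Qed.

Lemma gain_le_of_tau_ge_PI x : PI <= tau x -> gain x <= 3 / PI * (q x / V x).
Proof.
  intro Ht; pose proof (s_pos x); pose proof (q_pos x); pose proof (V_pos x); pose proof PI_RGT_0.
  pose proof period_pos.
  assert (E : gain x = q x / V x * ((2 * PI + tau x) / tau x ^ 2))
    by (unfold gain; rewrite tau_sqr; field; repeat split; lra).
  rewrite E, Rmult_comm; apply Rmult_le_compat_r; [apply Rlt_le, Rdiv_lt_0_compat; assumption |].
  apply (Rmult_le_reg_r (tau x ^ 2 * PI)); [apply Rmult_lt_0_compat; [apply pow_lt |]; lra |].
  replace ((2 * PI + tau x) / tau x ^ 2 * (tau x ^ 2 * PI)) with ((2 * PI + tau x) * PI)
    by (field; lra).
  replace (3 / PI * (tau x ^ 2 * PI)) with (3 * tau x ^ 2) by (field; lra).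
  nra.
Qed.

Section Decay.

Variables (delta M : R).
Hypothesis delta_pos : 0 < delta.
Hypothesis detuning_decay : forall x, Rabs (detuning x) * exp (delta * (p - 1) * vnorm x) <= M.

Lemma vnorm_le_of_tau_lt_PI x : tau x < PI ->
  vnorm x <= ln (M / PI + 1) / (delta * (p - 1)).
Proof.
  intro Ht; pose proof (tau_pos x); pose proof PI_RGT_0.
  assert (Hdp : 0 < delta * (p - 1)) by (apply Rmult_lt_0_compat; lra).
  assert (HD : PI < Rabs (detuning x)) by (unfold detuning; rewrite Rabs_pos_eq; lra).
  assert (He : exp (delta * (p - 1) * vnorm x) < M / PI + 1).
  { apply (Rmult_lt_reg_l PI); [lra |].
    pose proof (exp_pos (delta * (p - 1) * vnorm x)); pose proof (detuning_decay x).
    replace (PI * (M / PI + 1)) with (M + PI) by (field; lra); nra. }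
  apply ln_increasing in He; [| apply exp_pos]; rewrite ln_exp in He.
  apply (Rmult_le_reg_r (delta * (p - 1))); [exact Hdp |].
  unfold Rdiv; rewrite Rmult_assoc, Rinv_l by lra; lra.
Qed.

Lemma gain_detuning_bounded : (exists M', forall x, q x / V x <= M') ->
  exists K, forall x, gain x * Rabs (detuning x) * exp (delta * (p - 1) * vnorm x) <= K.
Proof.
  intros [M' HM']; pose proof PI_RGT_0.
  assert (HM : 0 <= M).
  { eapply Rle_trans; [| apply (detuning_decay origin)].
    apply Rmult_le_pos; [apply Rabs_pos | apply Rlt_le, exp_pos]. }
  assert (HM'0 : 0 <= M')
    by (pose proof (HM' origin); pose proof (Rdiv_lt_0_compat _ _ (q_pos origin) (V_pos origin)); lra).
  set (r0 := Rmax 0 (ln (M / PI + 1) / (delta * (p - 1)))).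
  destruct (radial_bounded_on_ball gain r0 radial_gain (fun x => proj1 (proj1 C2on_gain x I))
              (Rmax_l _ _)) as [Mg Hball].
  assert (HMg : 0 <= Mg).
  { apply Rlt_le, (Rlt_le_trans _ (gain origin)); [apply gain_pos | apply Hball].
    rewrite vnorm_origin; apply Rmax_l. }
  exists (3 / PI * M' * M + Mg * M); intro x.
  assert (Hg : gain x * Rabs (detuning x) * exp (delta * (p - 1) * vnorm x) <= gain x * M)
    by (rewrite Rmult_assoc; apply Rmult_le_compat_l; [apply Rlt_le, gain_pos | apply detuning_decay]).
  assert (P1 : 0 <= 3 / PI * M' * M)
    by (apply Rmult_le_pos; [apply Rmult_le_pos; [apply Rlt_le, Rdiv_lt_0_compat |] |]; lra).
  assert (P2 : 0 <= Mg * M) by (apply Rmult_le_pos; lra).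
  destruct (Rle_or_lt PI (tau x)) as [Ht | Ht].
  - assert (gain x * M <= 3 / PI * M' * M); [| lra].
    apply Rmult_le_compat_r; [lra |]; eapply Rle_trans; [apply gain_le_of_tau_ge_PI, Ht |].
    apply Rmult_le_compat_l; [apply Rlt_le, Rdiv_lt_0_compat; lra | apply HM'].
  - assert (gain x * M <= Mg * M); [| lra].
    apply Rmult_le_compat_r; [lra | apply Hball].
    eapply Rle_trans; [apply vnorm_le_of_tau_lt_PI, Ht | apply Rmax_r].
Qed.

Lemma exp_eq_Rpower y : exp (delta * y) = Rpower (exp (delta * (p - 1) * y)) (1 / (p - 1)).
Proof. unfold Rpower; rewrite ln_exp; f_equal; field; lra. Qed.

Lemma amplitude_decay : (exists M', forall x, q x / V x <= M') ->
  exists K, forall x, amplitude x * exp (delta * vnorm x) <= K.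
Proof.
  intro H4; destruct (gain_detuning_bounded H4) as [K HK].
  exists (rpow K (1 / (p - 1))); intro x; unfold amplitude, profile.
  destruct (Req_dec (Rabs (detuning x)) 0) as [Z | NZ];
    [rewrite Z, rpow_0, Rmult_0_r, Rmult_0_l; apply rpow_ge0 |].
  assert (HD : 0 < Rabs (detuning x)) by (pose proof (Rabs_pos (detuning x)); lra).
  pose proof (gain_pos x) as Hg; pose proof (exp_pos (delta * (p - 1) * vnorm x)) as He.
  assert (Hgd : 0 < gain x * Rabs (detuning x)) by (apply Rmult_lt_0_compat; assumption).
  assert (Hgde : 0 < gain x * Rabs (detuning x) * exp (delta * (p - 1) * vnorm x))
    by (apply Rmult_lt_0_compat; assumption).
  assert (HK0 : 0 < K) by (eapply Rlt_le_trans; [exact Hgde | apply HK]).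
  rewrite !rpow_Rpower, exp_eq_Rpower, Rpower_mult_distr, Rpower_mult_distr by assumption.
  apply Rle_Rpower_l; [apply Rlt_le, Rdiv_lt_0_compat; lra | split; [exact Hgde | apply HK]].
Qed.

End Decay.

Lemma radial_detuning : radial detuning.
Proof. intros x y E; unfold detuning, tau; rewrite (s_radial x y E), (q_radial x y E); reflexivity. Qed.

Lemma rpow_amplitude x : 0 < Rabs (detuning x) ->
  rpow (amplitude x) (p - 1) = gain x * Rabs (detuning x).
Proof.
  intro HD; pose proof (gain_pos x).
  unfold amplitude, profile; rewrite (rpow_Rpower (gain x)), (rpow_Rpower (Rabs _)), Rpower_mult_distr
    by assumption.
  rewrite rpow_Rpower, Rpower_mult by (unfold Rpower; apply exp_pos).
  replace (1 / (p - 1) * (p - 1)) with 1 by (field; lra).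
  apply Rpower_1, Rmult_lt_0_compat; assumption.
Qed.

Section Sign.

Variable sigma : R.
Hypothesis sigma_sign : sigma = 1 \/ sigma = -1.
Hypothesis detuning_sign : forall x, x <> origin -> 0 < sigma * detuning x.
Hypothesis profile_C2_to_zero : C2_to_zero_at_origin profile.

Lemma Rabs_detuning x : Rabs (detuning x) = sigma * detuning x.
Proof.
  destruct (origin_dec x) as [-> | Hx]; [rewrite detuning_origin, Rabs_R0; ring |].
  specialize (detuning_sign x Hx); destruct sigma_sign as [-> | ->];
    [rewrite Rabs_pos_eq | rewrite Rabs_left]; lra.
Qed.

Lemma profile_origin : profile origin = 0.
Proof. unfold profile; rewrite detuning_origin, Rabs_R0; apply rpow_0. Qed.

Lemma flat_profile : flat_at_origin profile.
Proof.
  split; [| exact (conj profile_origin profile_C2_to_zero)].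
  apply (C2on_ext _ open_punctured (fun x => rpow (sigma * detuning x) (1 / (p - 1))));
    [intros x _; unfold profile; rewrite Rabs_detuning; reflexivity |].
  apply (C2on_rpow _ _ _ open_punctured); [exact detuning_sign |].
  apply (C2on_sub (fun _ => True)); [auto | apply (C2on_scal _ open_true), C2on_detuning].
Qed.

Lemma isC2_breather_coord k : isC2 (breather_coord k).
Proof.
  apply isC2_C2on, (C2on_mult _ open_true); [apply C2on_gain_rpow |].
  apply isC2_C2on, isC2_flat_mul_unit_coord, flat_profile.
Qed.

Lemma breather_coord_norm x :
  sqrt (breather_coord A1 x ^ 2 + breather_coord A2 x ^ 2 + breather_coord A3 x ^ 2) = amplitude x.
Proof.
  destruct (origin_dec x) as [-> | Hx].
  - unfold breather_coord, amplitude; rewrite profile_origin.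
    replace (_ ^ 2 + _ ^ 2 + _ ^ 2) with 0 by ring; rewrite sqrt_0; ring.
  - replace (_ ^ 2 + _ ^ 2 + _ ^ 2)
      with (amplitude x ^ 2 * (unit_coord A1 x ^ 2 + unit_coord A2 x ^ 2 + unit_coord A3 x ^ 2))
      by (unfold breather_coord, amplitude; ring).
    rewrite sum_sqr_unit_coord, Rmult_1_r by exact Hx.
    apply sqrt_pow2, Rmult_le_pos; apply rpow_ge0.
Qed.

Lemma breather_coord_eq k x :
  (- (2 * PI / period s q) ^ 2 * s x + q x +
   sigma * V x * rpow (sqrt (breather_coord A1 x ^ 2 + breather_coord A2 x ^ 2
                             + breather_coord A3 x ^ 2)) (p - 1)) * breather_coord k x = 0.
Proof.
  destruct (origin_dec x) as [-> | Hx]; [unfold breather_coord; rewrite profile_origin; ring |].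
  assert (HD : 0 < Rabs (detuning x)) by (rewrite Rabs_detuning; apply detuning_sign, Hx).
  rewrite breather_coord_norm, rpow_amplitude, Rabs_detuning by exact HD.
  replace (sigma * V x * (gain x * (sigma * detuning x))) with (sigma ^ 2 * (V x * gain x * detuning x))
    by ring.
  rewrite <- dispersion_relation; destruct sigma_sign as [-> | ->]; ring.
Qed.

Lemma breather_coord_pd_sym j k x : pd j (breather_coord k) x = pd k (breather_coord j) x.
Proof.
  set (G y := rpow (gain y) (1 / (p - 1)) * profile y * inv_norm y).
  assert (E : forall m, breather_coord m = fun y => G y * coord m y)
    by (intro m; apply functional_extensionality; intro y; unfold breather_coord, unit_coord, G; ring).
  rewrite !E; apply radial_field_pd_sym.
  - intros y z Eyz; unfold G, profile, inv_norm.
    rewrite (radial_gain y z Eyz), (radial_detuning y z Eyz), Eyz; reflexivity.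
  - apply (C2on_mult _ open_punctured); [apply (C2on_mult _ open_punctured) |].
    + apply (C2on_sub (fun _ => True)); [auto | apply C2on_gain_rpow].
    + apply flat_profile.
    + apply C2on_inv_norm.
Qed.

Lemma breather_coord_pos : 0 < breather_coord A1 (shift A1 origin 1).
Proof.
  set (e1 := shift A1 origin 1).
  assert (He1 : e1 <> origin) by (apply shift_origin_neq; lra).
  assert (U : unit_coord A1 e1 = 1).
  { unfold unit_coord, inv_norm, e1; rewrite vnorm_shift_origin, Rabs_R1, coord_shift, coord_origin.
    cbn [kron]; field. }
  unfold breather_coord; rewrite U, Rmult_1_r.
  apply Rmult_lt_0_compat; apply rpow_gt0; [apply gain_pos |].
  rewrite Rabs_detuning; apply detuning_sign, He1.
Qed.

Definition breather (a : R) : R3 -> C3 := phased (PI * a) breather_coord.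

Lemma continuum_breathers delta : 0 < delta ->
  (exists M, forall x, Rabs (detuning x) * exp (delta * (p - 1) * vnorm x) <= M) ->
  (exists M, forall x, q x / V x <= M) ->
  continuum_of_breathers sigma p s q V delta.
Proof.
  intros Hd [M H3] H4; pose proof PI_RGT_0.
  exists breather; split; [intros a b Ha Hb Hab E | intros a Ha; split; [| split]].
  - apply Hab, (Rmult_eq_reg_l PI); [| lra].
    apply (phased_inj _ _ breather_coord A1 (shift A1 origin 1) breather_coord_pos);
      [nra | nra | exact E].
  - apply isC2_field_phased, isC2_breather_coord.
  - apply solves_phased; [apply breather_coord_pd_sym | apply breather_coord_eq].
  - destruct (amplitude_decay delta M Hd H3 H4) as [K HK]; exists K; intro x.
    unfold breather; rewrite c3norm_phased, breather_coord_norm; apply HK.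
Qed.

End Sign.

End Breather.

Theorem theorem1p3 (p : R) (s q V : R3 -> R) (delta : R) :
  1 < p ->
  (forall x, 0 < s x) -> (forall x, 0 < q x) -> (forall x, 0 < V x) ->
  radial s -> radial q -> radial V ->
  isC2 s -> isC2 q -> isC2 V ->
  (* (H2) *)
  C2_to_zero_at_origin
    (fun x => rpow (Rabs (2 * PI - period s q * sqrt (q x / s x))) (1 / (p - 1))) ->
  (* (H3) *)
  0 < delta ->
  (exists M : R, forall x,
      Rabs (2 * PI - period s q * sqrt (q x / s x)) * exp (delta * (p - 1) * vnorm x) <= M) ->
  (* (H4) *)
  (exists M : R, forall x, q x / V x <= M) ->
  (* case (H1): sign + ; case (H1)': sign - *)
  ((forall x, x <> origin -> period s q * sqrt (q x / s x) < 2 * PI) ->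
     continuum_of_breathers 1 p s q V delta) /\
  ((forall x, x <> origin -> period s q * sqrt (q x / s x) > 2 * PI) ->
     continuum_of_breathers (-1) p s q V delta).
Proof.
  intros Hp Hs Hq HV Rs Rq RV Cs Cq CV H2 Hd H3 H4.
  split; intro H1; apply continuum_breathers; auto.
  all: intros x Hx; specialize (H1 x Hx); unfold detuning, tau; lra.
Qed.
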